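(* Let $(X,d)$ be a nonempty metric space, let $F:X\rightarrow K(X)$ be a set-valued uniform pointwise contraction with modulus $\beta\in[0,1)$, and let $p:[0,1]\to X$ be a continuous path with $l(p)<\infty$. Then $l(F\circ p)\le\beta\, l(p)<\infty$, where $$l(F\circ p):=\sup_{\pi\in\Pi}\sum_{i=1}^n H(F(p(t_{i-1})),F(p(t_i))).$$
   Context: $\Pi$ is the set of finite partitions $0=t_0<t_1<\cdots<t_n=1$ of $[0,1]$. The length of a path $p$ is $l(p)=\sup_{\pi\in\Pi}\sum_{i=1}^n d(p(t_{i-1}),p(t_i))$. $K(X)$ is the set of nonempty compact subsets of $X$; $H$ is the Hausdorff distance $H(A,B)=\max\{\sup_{a\in A}\inf_{b\in B}d(a,b),\sup_{b\in B}\inf_{a\in A}d(a,b)\}$. $F$ is a set-valued uniform pointwise contraction with modulus $\beta$ if every $x\in X$ has an open neighborhood $N(x)$ with $H(F(x),F(y))\le\beta\, d(x,y)$ for all $y\in N(x)$. *)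

From HB Require Import structures.
From mathcomp Require Import all_boot all_order all_algebra.
From mathcomp Require Import all_classical all_reals all_analysis.
Set Implicit Arguments. Unset Strict Implicit. Unset Printing Implicit Defensive.
Import Order.TTheory GRing.Theory Num.Theory.
Local Open Scope classical_set_scope.
Local Open Scope ring_scope.

Section Defs.
Variables (R : realType) (X : Type) (d : X -> X -> R).

Definition is_metric : Prop :=
  (forall x y, 0 <= d x y) /\ (forall x y, d x y = 0 <-> x = y) /\
  (forall x y, d x y = d y x) /\ (forall x y z, d x z <= d x y + d y z).

Definition mopen (U : set X) : Prop :=
  forall x, U x -> exists e : R, 0 < e /\ forall y, d x y < e -> U y.

Definition mcompact (K : set X) : Prop :=
  forall (I : Type) (U : I -> set X), (forall i, mopen (U i)) ->
    K `<=` \bigcup_i U i ->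
    exists J : set I, finite_set J /\ K `<=` \bigcup_(i in J) U i.

Definition nonempty_compact (K : set X) : Prop := K !=set0 /\ mcompact K.

Definition hausdorff (A B : set X) : \bar R :=
  Order.max
    (ereal_sup [set ereal_inf [set (d a b)%:E | b in B] | a in A])
    (ereal_sup [set ereal_inf [set (d a b)%:E | a in A] | b in B]).

Definition uniform_pointwise_contraction (F : X -> set X) (beta : R) : Prop :=
  forall x, exists N : set X, mopen N /\ N x /\
    forall y, N y -> (hausdorff (F x) (F y) <= (beta * d x y)%:E)%E.

(* continuity of a path [0,1] -> X (path given as a function on R,
   only its values on [0,1] matter) *)
Definition path_continuous (p : R -> X) : Prop :=
  forall t, 0 <= t <= 1 -> forall e : R, 0 < e ->
    exists delta : R, 0 < delta /\
      forall s, 0 <= s <= 1 -> `|s - t| < delta -> d (p t) (p s) < e.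
End Defs.

Definition is_partition (R : realType) (n : nat) (t : nat -> R) : Prop :=
  t 0%N = 0 /\ t n = 1 /\ forall i, (i < n)%N -> t i < t i.+1.

Definition var_len (R : realType) (X : Type) (D : X -> X -> \bar R)
  (p : R -> X) : \bar R :=
  ereal_sup [set v : \bar R | exists (n : nat) (t : nat -> R),
    is_partition n t /\ v = (\sum_(i < n) D (p (t i)) (p (t i.+1)))%E].

From HB Require Import structures.
From mathcomp Require Import all_boot all_order all_algebra.
From mathcomp Require Import all_classical all_reals all_analysis.
Import Order.TTheory GRing.Theory Num.Theory.
Local Open Scope classical_set_scope.
Local Open Scope ring_scope.
Set Implicit Arguments. Unset Strict Implicit. Unset Printing Implicit Defensive.

(** The pointwise contraction of [F] at [p T] and the continuity of [p] at [T]
    give [H(F(p T), F(p s)) <= beta d(p T, p s)] for all [s] near [T].  Since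
    [H] is a pseudometric on nonempty sets, a real-induction (supremum) argument on
    [[a, b]] produces a subdivision [w] of [[a, b]] with
    [H(F(p a), F(p b)) <= beta * sum_j d(p w_j, p w_(j+1))].  Concatenating
    these subdivisions over the intervals of a partition of [[0, 1]] bounds the
    Hausdorff sum of the partition by [beta] times a length sum of [p], hence
    by [beta l(p)]. *)

Section Excess.
Variables (R : realType) (X : Type) (D : X -> X -> R).
Hypothesis D_ge0 : forall x y, 0 <= D x y.
Hypothesis D_triangle : forall x y z, D x z <= D x y + D y z.

Definition edist_set (x : X) (C : set X) : \bar R :=
  ereal_inf [set (D x c)%:E | c in C].

Definition excess (A B : set X) : \bar R :=
  ereal_sup [set edist_set a B | a in A].

Lemma edist_set_ge0 x C : (0 <= edist_set x C)%E.
Proof. by apply/ereal_infP => _ [c _ <-]; rewrite lee_fin. Qed.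

Lemma edist_set_triangle x y C :
  (edist_set x C <= (D x y)%:E + edist_set y C)%E.
Proof.
rewrite -leeBlDl //; apply/ereal_infP => _ [c Cc <-]; rewrite leeBlDl // -EFinD.
by apply: ge_ereal_inf; exists (D x c)%:E; [exists c | rewrite lee_fin].
Qed.

Lemma excess_triangle A B C : B !=set0 ->
  (excess A C <= excess A B + excess B C)%E.
Proof.
move=> [b0 Bb0]; apply: ge_ereal_sup => _ [a Aa <-].
have le_AB : (edist_set a B <= excess A B)%E by apply: ereal_sup_ubound; exists a.
have : (0 <= excess B C)%E.
  by apply: le_trans (edist_set_ge0 b0 C) _; apply: ereal_sup_ubound; exists b0.
case E : (excess B C) => [s| |] // _; last first.
  have AB_ge0 := le_trans (edist_set_ge0 a B) le_AB.
  by rewrite addey ?leey // gt_eqF // (lt_le_trans _ AB_ge0).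
rewrite -leeBlDr //; apply: le_trans le_AB; apply/ereal_infP => _ [b Bb <-].
rewrite leeBlDr //; apply: le_trans (edist_set_triangle a b C) _; apply: leeD2l.
by rewrite -E; apply: ereal_sup_ubound; exists b.
Qed.
End Excess.

Section Hausdorff.
Variables (R : realType) (X : Type) (d : X -> X -> R).
Hypothesis d_metric : is_metric d.

Lemma hausdorffE A B : hausdorff d A B = maxe (excess d A B) (excess d B A).
Proof.
case: d_metric => _ [_ [d_sym _]]; congr maxe.
congr (ereal_sup (image B _)); apply: funext => b.
by congr (ereal_inf (image A _)); apply: funext => a; rewrite d_sym.
Qed.

Lemma hausdorff_sym A B : hausdorff d A B = hausdorff d B A.
Proof. by rewrite !hausdorffE maxC. Qed.

Lemma hausdorff_triangle A B C : B !=set0 ->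
  (hausdorff d A C <= hausdorff d A B + hausdorff d B C)%E.
Proof.
case: d_metric => d_ge0 [_ [_ d_tri]] B0; rewrite !hausdorffE ge_max.
apply/andP; split.
  by apply: le_trans (excess_triangle d_ge0 d_tri A C B0) (leeD _ _);
    rewrite le_max lexx.
rewrite addeC; apply: le_trans (excess_triangle d_ge0 d_tri C A B0) (leeD _ _);
  by rewrite le_max lexx orbT.
Qed.

Lemma hausdorff_self_le0 A : (hausdorff d A A <= 0)%E.
Proof.
case: d_metric => _ [d_eq0 _]; rewrite hausdorffE maxxx.
apply: ge_ereal_sup => _ [a Aa <-]; apply: ge_ereal_inf.
by exists (d a a)%:E; [exists a | rewrite (proj2 (d_eq0 a a) erefl)].
Qed.
End Hausdorff.

Lemma real_induction (R : realType) (P : R -> Prop) (a b : R) :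
  a <= b -> P a ->
  (forall T, a <= T <= b -> exists2 e, 0 < e &
     (forall t, a <= t < T -> T - e < t -> P t -> P T) /\
     (P T -> forall s, T < s <= b -> s < T + e -> P s)) ->
  P b.
Proof.
move=> ab Pa local.
pose S := [set t | a <= t <= b /\ P t].
have Sa : S a by split; rewrite ?lexx ?ab.
have S_sup : has_sup S by split; [exists a | exists b => t [/andP[]]].
pose T := sup S.
have aT : a <= T by apply: sup_upper_bound.
have Tb : T <= b by apply: ge_sup; [exists a | move=> t [/andP[]]].
have [e e0 [P_left P_right]] := local T (introT andP (conj aT Tb)).
have PT : P T.
  have [t [/andP[a_le_t t_le_b] Pt] Tt] := sup_adherent e0 S_sup.
  have tT : t <= T by apply: sup_upper_bound => //; split; rewrite ?a_le_t.
  have [<- //|tNT] := eqVneq t T.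
  by apply: P_left Pt; rewrite // a_le_t lt_neqAle tNT.
have [T_lt_b|] := ltP T b; last by move=> bT; rewrite -(@le_anti _ _ T b) ?Tb.
pose s := Num.min b (T + e / 2).
have Ts : T < s by rewrite lt_min T_lt_b ltrDl divr_gt0.
have Ss : S s.
  split; first by rewrite ge_min lexx (le_trans aT (ltW Ts)).
  apply: P_right => //; first by rewrite Ts ge_min lexx.
  by rewrite gt_min ltrD2l ltr_pdivrMr // ltr_pMr // ltr1n orbT.
by have := sup_upper_bound S_sup Ss; rewrite leNgt Ts.
Qed.

Section Subdivision.
Variable R : numDomainType.

Definition subdivision (a b : R) (n : nat) (t : nat -> R) : Prop :=
  t 0%N = a /\ t n = b /\ forall i, (i < n)%N -> t i < t i.+1.

Definition cat_subdivision (m : nat) (u w : nat -> R) : nat -> R :=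
  fun j => if (j <= m)%N then u j else w (j - m)%N.

Lemma cat_subdivision_ge m u w j : u m = w 0%N -> (m <= j)%N ->
  cat_subdivision m u w j = w (j - m)%N.
Proof.
move=> uw mj; rewrite /cat_subdivision; case: leqP => // jm.
have -> : j = m by apply/eqP; rewrite eqn_leq jm mj.
by rewrite subnn.
Qed.

Lemma subdivision_cat a b c m n u w :
  subdivision a b m u -> subdivision b c n w ->
  subdivision a c (m + n) (cat_subdivision m u w).
Proof.
move=> [u0 [um u_incr]] [w0 [wn w_incr]].
have uw : u m = w 0%N by rewrite um w0.
split; first by rewrite /cat_subdivision leq0n.
split; first by rewrite cat_subdivision_ge ?leq_addr // addKn.
move=> j j_lt; have [jm | mj] := ltnP j m.
  by rewrite /cat_subdivision jm (ltnW jm); apply: u_incr.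
rewrite !cat_subdivision_ge ?(leqW mj) // subSn //; apply: w_incr.
by rewrite ltn_subLR.
Qed.

Lemma subdivision_step a b : a < b ->
  subdivision a b 1 (fun j => if j == 0%N then a else b).
Proof. by move=> ab; split=> //; split=> // [[]]. Qed.

Lemma subdivision_le a b n t i : subdivision a b n t -> (i <= n)%N ->
  a <= t i <= b.
Proof.
move=> [t0 [tn t_incr]] i_le_n.
have t_mono : {in [pred j | j <= n]%N &, {homo t : j k / (j <= k)%N >-> j <= k}}.
  apply: Order.NatMonotonyTheory.nondecn_inP
    => [j l _ /[!inE] ln k /andP[_ kl]|j _ /[!inE] jn].
    exact: leq_trans (ltnW kl) ln.
  exact/ltW/t_incr.
by rewrite -{1}t0 -tn !t_mono ?inE.
Qed.
End Subdivision.

Section PathSum.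
Variables (R : realType) (X : Type) (d : X -> X -> R) (p : R -> X).

Definition path_sum (n : nat) (t : nat -> R) : R :=
  \sum_(0 <= j < n) d (p (t j)) (p (t j.+1)).

Lemma path_sum_cat m n u w : u m = w 0%N ->
  path_sum (m + n) (cat_subdivision m u w) = path_sum m u + path_sum n w.
Proof.
move=> uw; rewrite /path_sum (@big_cat_nat _ _ _ m) ?leq_addr // /=.
congr (_ + _).
  by apply: eq_big_nat => j /andP[_ jm]; rewrite /cat_subdivision jm (ltnW jm).
rewrite -{1}[m]add0n big_addn addKn; apply: eq_big_nat => j _.
by rewrite -addSn !cat_subdivision_ge ?leq_addl // !addnK.
Qed.

Lemma path_sum_step a b :
  path_sum 1 (fun j => if j == 0%N then a else b) = d (p a) (p b).
Proof. by rewrite /path_sum big_nat1. Qed.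

Lemma path_sum_le_var_len n t : is_partition n t ->
  ((path_sum n t)%:E <= var_len (fun x y => (d x y)%:E) p)%E.
Proof.
move=> t_part; apply: ereal_sup_ubound; exists n, t; split=> //.
by rewrite /path_sum big_mkord sumEFin.
Qed.

Variable beta : R.

Definition dominated_by_path_sum (v : \bar R) (a b : R) : Prop :=
  exists n t, subdivision a b n t /\ (v <= (beta * path_sum n t)%:E)%E.

Lemma dominated_by_path_sum_le v v' a b : (v <= v')%E ->
  dominated_by_path_sum v' a b -> dominated_by_path_sum v a b.
Proof.
by move=> vv' [n [t [tS le_v']]]; exists n, t; split; last exact: le_trans le_v'.
Qed.

Lemma dominated_by_path_sum0 a : dominated_by_path_sum 0 a a.
Proof. by exists 0%N, (fun=> a); split; [|rewrite /path_sum big_geq ?mulr0]. Qed.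

Lemma dominated_by_path_sum_step a b : a < b ->
  dominated_by_path_sum (beta * d (p a) (p b))%:E a b.
Proof.
move=> ab; exists 1%N, (fun j => if j == 0%N then a else b).
by split; [exact: subdivision_step|rewrite path_sum_step].
Qed.

Lemma dominated_by_path_sum_cat v v' a b c :
  dominated_by_path_sum v a b -> dominated_by_path_sum v' b c ->
  dominated_by_path_sum (v + v') a c.
Proof.
move=> [m [u [uS le_v]]] [n [w [wS le_v']]].
exists (m + n)%N, (cat_subdivision m u w).
split; first exact: subdivision_cat uS wS.
rewrite path_sum_cat; last by case: uS => _ [-> _]; case: wS => ->.
by rewrite mulrDr EFinD leeD.
Qed.
End PathSum.

Section ContractionAlongPath.
Variables (R : realType) (X : Type) (d : X -> X -> R) (F : X -> set X).
Variables (beta : R) (p : R -> X).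
Hypothesis d_metric : is_metric d.
Hypothesis F_neq0 : forall x, F x !=set0.
Hypothesis F_contraction : uniform_pointwise_contraction d F beta.
Hypothesis p_cont : path_continuous d p.

Let h s t := hausdorff d (F (p s)) (F (p t)).

Lemma local_contraction_along_path T : 0 <= T <= 1 -> exists2 e, 0 < e &
  forall s, 0 <= s <= 1 -> `|s - T| < e -> (h T s <= (beta * d (p T) (p s))%:E)%E.
Proof.
move=> T01; have [N [N_open [NpT N_contr]]] := F_contraction (p T).
have [r [r0 N_ball]] := N_open _ NpT.
have [e [e0 near_T]] := p_cont T01 r0.
by exists e => // s s01 sT; apply/N_contr/N_ball/near_T.
Qed.

Lemma dominated_hausdorff_extend a t s : t < s ->
  (h t s <= (beta * d (p t) (p s))%:E)%E ->
  dominated_by_path_sum d p beta (h a t) a t ->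
  dominated_by_path_sum d p beta (h a s) a s.
Proof.
move=> ts h_ts dom_t.
apply: (@dominated_by_path_sum_le _ _ _ _ _ _ (h a t + h t s)).
  exact: hausdorff_triangle.
apply: dominated_by_path_sum_cat dom_t _.
exact: dominated_by_path_sum_le h_ts (dominated_by_path_sum_step _ _ _ ts).
Qed.

Lemma dominated_hausdorff_interval a b : 0 <= a -> a <= b -> b <= 1 ->
  dominated_by_path_sum d p beta (h a b) a b.
Proof.
move=> a0 ab b1; case: (d_metric) => _ [_ [d_sym _]].
pose P t := dominated_by_path_sum d p beta (h a t) a t.
apply: (real_induction (P := P)) ab _ _.
  apply: dominated_by_path_sum_le (dominated_by_path_sum0 _ _ _ _).
  exact: hausdorff_self_le0.
move=> T /andP[aT Tb].
have T01 : 0 <= T <= 1 by rewrite (le_trans a0 aT) (le_trans Tb b1).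
have [e e0 near_T] := local_contraction_along_path T01.
exists e => //; split=> [t /andP[a_le_t tT] Tt Pt|dom_T s /andP[Ts sb] sT].
  apply: dominated_hausdorff_extend (tT) _ Pt; rewrite /h hausdorff_sym // d_sym.
  apply: near_T.
    by rewrite (le_trans a0 a_le_t) (le_trans (ltW tT) (le_trans Tb b1)).
  by rewrite distrC ger0_norm ?subr_ge0 ?(ltW tT) // ltrBlDl -ltrBlDr.
apply: dominated_hausdorff_extend (Ts) _ dom_T; apply: near_T.
  by rewrite (le_trans a0 (le_trans aT (ltW Ts))) (le_trans sb b1).
by rewrite ger0_norm ?subr_ge0 ?(ltW Ts) // ltrBlDl.
Qed.

Lemma dominated_hausdorff_sum a b n t : 0 <= a -> b <= 1 -> subdivision a b n t ->
  dominated_by_path_sum d p beta (\sum_(0 <= i < n) h (t i) (t i.+1)) a b.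
Proof.
move=> a0 b1 tS; case: (tS) => t0 [tn t_incr].
suff dom_k k : (k <= n)%N ->
    dominated_by_path_sum d p beta (\sum_(0 <= i < k) h (t i) (t i.+1)) a (t k).
  by rewrite -tn; apply: dom_k.
elim: k => [_|k IH kn].
  by rewrite big_geq // t0; exact: dominated_by_path_sum0.
rewrite big_nat_recr //=; apply: dominated_by_path_sum_cat (IH (ltnW kn)) _.
have /andP[ak _] := subdivision_le tS (ltnW kn).
have /andP[_ k1b] := subdivision_le tS kn.
apply: dominated_hausdorff_interval (ltW (t_incr _ kn)) _.
  exact: le_trans a0 ak.
exact: le_trans k1b b1.
Qed.
End ContractionAlongPath.

Theorem lemma13 (R : realType) (X : Type) (d : X -> X -> R)
  (F : X -> set X) (beta : R) (p : R -> X) :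
  is_metric d -> inhabited X ->
  (forall x, nonempty_compact d (F x)) ->
  0 <= beta < 1 ->
  uniform_pointwise_contraction d F beta ->
  path_continuous d p ->
  (var_len (fun x y => (d x y)%:E) p < +oo)%E ->
  (var_len (fun x y => hausdorff d (F x) (F y)) p
     <= beta%:E * var_len (fun x y => (d x y)%:E) p)%E /\
  (beta%:E * var_len (fun x y => (d x y)%:E) p < +oo)%E.
Proof.
move=> d_metric _ F_compact /andP[beta0 _] F_contraction p_cont l_fin.
have F_neq0 x : F x !=set0 by case: (F_compact x).
split; last by apply: lte_mul_pinfty; rewrite ?lee_fin.
apply: ge_ereal_sup => _ [n [t [t_part ->]]].
rewrite -(big_mkord xpredT (fun i => hausdorff d (F (p (t i))) (F (p (t i.+1))))).
have [m [w [w_part le_sum]]] :=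
  dominated_hausdorff_sum d_metric F_neq0 F_contraction p_cont
    (lexx 0) (lexx 1) t_part.
apply: le_trans le_sum _; rewrite EFinM.
apply: lee_wpmul2l; first by rewrite lee_fin.
exact: path_sum_le_var_len.
Qed.
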